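(* Let $p$ be holomorphic and not constant on a neighborhood $\mathcal{B}$ of $z_0\in\mathbb{C}$, with $p(z)=p(z_0)-p_0(z-z_0)^\mu(1-\phi(z))$ on $\mathcal{B}$, $\mu\in\mathbb{Z}_{\ge1}$, $p_0\neq0$, $\phi$ holomorphic, $\phi(z_0)=0$. Let $\omega_0=\arg p_0$, $\theta_\ell=-\omega_0/\mu+2\pi\ell/\mu$, and let $R_p>0$ and the functions $f_\ell$ ($\ell\in\mathbb{Z}$) be as described in the context. Then $$f_{2\ell-1}(r)<\theta_\ell<f_{2\ell}(r)\quad\text{for all } r\in[0,R_p],\ \ell\in\mathbb{Z},$$ and $$\mathrm{Re}\big(p(z_0+re^{i\theta_\ell})-p(z_0)\big)<0\quad\text{for all } r\in(0,R_p],\ \ell\in\mathbb{Z}.$$ More generally, for every $r\in(0,R_p]$, one has $\mathrm{Re}\big(p(z_0+re^{i\theta})-p(z_0)\big)<0$ if and only if $f_{2\ell-1}(r)<\theta<f_{2\ell}(r)$ for some $\ell\in\mathbb{Z}$.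
   Context: $R_p>0$ is such that the closed disk of radius $R_p$ about $z_0$ lies in $\mathcal{B}$, and with $\delta_\ell=-\omega_0/\mu+\pi(\ell+1/2)/\mu$: all solutions $(r,\theta)$, $r\in[0,R_p]$, of $\mathrm{Re}\big(p(z_0+re^{i\theta})-p(z_0)\big)/r^\mu=0$ (at $r=0$ meaning $-|p_0|\cos(\omega_0+\mu\theta)=0$) are exactly the pairs $(r,f_\ell(r))$, $\ell\in\mathbb{Z}$, where each $f_\ell$ is differentiable on an interval containing $[0,R_p]$, $f_\ell(0)=\delta_\ell$ and $|f_\ell(r)-\delta_\ell|\le\pi/(4\mu)$ for $r\in[0,R_p]$. $\arg$ takes values in $(-\pi,\pi]$. *)

From Stdlib Require Import Reals ZArith.
From Coquelicot Require Import Coquelicot.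
Open Scope R_scope.

Definition Cexpi (t : R) : C := (cos t, sin t).

Definition is_arg (z : C) (w : R) : Prop :=
  -PI < w <= PI /\ z = Cmult (RtoC (Cmod z)) (Cexpi w).

Definition holomorphic_on (f : C -> C) (B : C -> Prop) : Prop :=
  forall z, B z -> ex_derive (K := C_AbsRing) (V := C_NormedModule) f z.

Definition diff_around (f : R -> R) (Rp : R) : Prop :=
  exists a b, a < 0 /\ Rp < b /\ forall r, a < r < b -> ex_derive f r.

From Stdlib Require Import Reals ZArith Lra Lia.
From Coquelicot Require Import Coquelicot.
Open Scope R_scope.

(* Write Re (p (z0 + r e^{i th}) - p z0) = r^mu G(r, th), where G is continuous on the closed
   disk and G(0, th) = -|p0| cos (omega0 + mu th).  The angles alpha_m = (m PI - omega0) / mu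
   interlace the zero curves, f_(m-1)(r) < alpha_m < f_m(r), so by the intermediate value
   theorem G(., alpha_m) keeps the sign of G(0, alpha_m) = -|p0| (-1)^m along the whole radius,
   and G(r, .) keeps that sign on the whole gap (f_(m-1)(r), f_m(r)).  The gaps where the real
   part is negative are thus exactly those with m even, and theta_l = alpha_(2 l). *)

Lemma cos_INR_mult_PI (n : nat) : cos (INR n * PI) = (-1) ^ n.
Proof.
  induction n as [|n IH].
  - now rewrite Rmult_0_l, cos_0.
  - rewrite S_INR, Rmult_plus_distr_r, Rmult_1_l, neg_cos, IH; simpl; ring.
Qed.

Lemma cos_IZR_mult_PI (m : Z) : cos (IZR m * PI) = (-1) ^ Z.abs_nat m.
Proof.
  rewrite <- cos_INR_mult_PI, INR_IZR_INZ, Zabs2Nat.id_abs.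
  destruct (Z.abs_spec m) as [[_ ->] | [_ ->]]; [reflexivity |].
  rewrite opp_IZR, <- cos_neg. f_equal. ring.
Qed.

Lemma cos_mult_PI_even (m : Z) : Z.Even m -> cos (IZR m * PI) = 1.
Proof.
  intros [l ->]. rewrite cos_IZR_mult_PI.
  destruct (Nat.Even_or_Odd (Z.abs_nat (2 * l))) as [[k Hk] | [k Hk]]; [| lia].
  rewrite Hk. apply pow_1_even.
Qed.

Lemma cos_mult_PI_odd (m : Z) : Z.Odd m -> cos (IZR m * PI) = -1.
Proof.
  intros [l ->]. rewrite cos_IZR_mult_PI.
  destruct (Nat.Even_or_Odd (Z.abs_nat (2 * l + 1))) as [[k Hk] | [k Hk]]; [lia |].
  rewrite Hk, Nat.add_1_r. apply pow_1_odd.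
Qed.

Lemma no_root_same_sign (g : R -> R) (a b : R) : a <= b ->
  (forall x, a <= x <= b -> continuity_pt g x) ->
  (forall x, a <= x <= b -> g x <> 0) ->
  0 < g a * g b.
Proof.
  intros Hab Hcont Hroot.
  assert (Ha : g a <> 0) by (apply Hroot; lra).
  assert (Hb : g b <> 0) by (apply Hroot; lra).
  destruct (Rle_lt_or_eq_dec a b Hab) as [Hlt | <-]; [| now apply Rsqr_pos_lt].
  destruct (Rlt_or_le 0 (g a * g b)) as [Hpos | Hneg]; [exact Hpos | exfalso].
  destruct (Rlt_or_le (g a) 0) as [Hga | Hga].
  - destruct (Ranalysis5.IVT_interv g a b Hcont Hlt Hga ltac:(nra)) as [x [Hx Hgx]].
    exact (Hroot x Hx Hgx).
  - destruct (Ranalysis5.IVT_interv (fun x => - g x) a b) as [x [Hx Hgx]]; try nra.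
    + intros x Hx. apply continuity_pt_opp, Hcont, Hx.
    + exact (Hroot x Hx ltac:(lra)).
Qed.

Section Interlacing.

Variables (c q : R) (y : Z -> R).
Hypothesis q_pos : 0 < q.
Hypothesis y_near : forall k, Rabs (y k - (c + q * (IZR k + 1/2))) <= q / 4.

Lemma interlacing_lt (k k' : Z) : (k < k')%Z -> y k < y k'.
Proof.
  intros Hk.
  assert (IZR k + 1 <= IZR k') by (rewrite <- plus_IZR; apply IZR_le; lia).
  pose proof (proj1 (Rabs_le_between' _ _ _) (y_near k)).
  pose proof (proj1 (Rabs_le_between' _ _ _) (y_near k')).
  nra.
Qed.

Lemma interlacing_le (k k' : Z) : (k <= k')%Z -> y k <= y k'.
Proof.
  intros Hk. destruct (Z.eq_dec k k') as [-> | Hne]; [lra |].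
  apply Rlt_le, interlacing_lt. lia.
Qed.

Lemma interlacing_gap_mid (m : Z) : y (m - 1) < c + q * IZR m < y m.
Proof.
  pose proof (proj1 (Rabs_le_between' _ _ _) (y_near (m - 1))).
  pose proof (proj1 (Rabs_le_between' _ _ _) (y_near m)).
  rewrite minus_IZR in *. lra.
Qed.

Lemma interlacing_gap_free (k m : Z) : ~ (y (m - 1) < y k < y m).
Proof.
  intros [H1 H2]. destruct (Z.le_gt_cases k (m - 1)) as [Hk | Hk].
  - pose proof (interlacing_le k (m - 1) Hk). lra.
  - pose proof (interlacing_le m k ltac:(lia)). lra.
Qed.

Lemma interlacing_cover (th : R) :
  (forall k, th <> y k) -> exists m, y (m - 1) < th < y m.
Proof.
  intros Hth.
  set (x := (th - c) / q).
  set (n := (up x - 1)%Z).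
  destruct (archimed x) as [Hup1 Hup2].
  assert (Hn : IZR n = IZR (up x) - 1) by (unfold n; now rewrite minus_IZR).
  assert (Hx : th = c + q * x) by (unfold x; field; lra).
  assert (Hlo : c + q * IZR n <= th) by (rewrite Hn, Hx; nra).
  assert (Hhi : th < c + q * IZR (n + 1)) by (rewrite plus_IZR, Hn, Hx; nra).
  pose proof (interlacing_gap_mid n). pose proof (interlacing_gap_mid (n + 1)).
  replace (n + 1 - 1)%Z with n in * by ring.
  destruct (Rtotal_order th (y n)) as [Hlt | [Heq | Hgt]].
  - exists n. lra.
  - exfalso. exact (Hth n Heq).
  - exists (n + 1)%Z. replace (n + 1 - 1)%Z with n by ring. lra.
Qed.

Lemma same_gap_same_sign (g : R -> R) (m : Z) (th1 th2 : R) :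
  continuity g -> (forall th, g th = 0 -> exists k, th = y k) ->
  y (m - 1) < th1 < y m -> y (m - 1) < th2 < y m ->
  0 < g th1 * g th2.
Proof.
  intros Hg Hroots.
  assert (Hwlog : forall a b, a <= b -> y (m - 1) < a < y m -> y (m - 1) < b < y m ->
            0 < g a * g b).
  { intros a b Hab Ha Hb. apply no_root_same_sign; [exact Hab | intros; apply Hg |].
    intros x Hx Hgx. destruct (Hroots x Hgx) as [k ->].
    apply (interlacing_gap_free k m). lra. }
  intros H1 H2. destruct (Rle_or_lt th1 th2).
  - now apply Hwlog.
  - rewrite Rmult_comm. apply Hwlog; auto; lra.
Qed.

End Interlacing.

Definition polar (z0 : C) (r th : R) : C := Cplus z0 (Cmult (RtoC r) (Cexpi th)).

(* If [p z = p z0 - p0 (z - z0)^n (1 - phi z)], this is [Re (p (polar z0 r th) - p z0) / r ^ n],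
   but it stays meaningful at [r = 0]. *)
Definition re_profile (p0 : C) (phi : C -> C) (z0 : C) (n : nat) (r th : R) : R :=
  - Re (Cmult (Cmult p0 (Cexpi (INR n * th))) (Cminus (RtoC 1) (phi (polar z0 r th)))).

Lemma Cpow_polar (r t : R) (n : nat) :
  Cpow (Cmult (RtoC r) (Cexpi t)) n = Cmult (RtoC (r ^ n)) (Cexpi (INR n * t)).
Proof.
  induction n as [|n IH]; simpl Cpow.
  - unfold Cexpi. rewrite Rmult_0_l, cos_0, sin_0.
    apply injective_projections; simpl; ring.
  - rewrite IH, S_INR. unfold Cexpi, Cmult, RtoC; simpl.
    replace ((INR n + 1) * t) with (t + INR n * t) by ring.
    rewrite cos_plus, sin_plus. apply injective_projections; simpl; ring.
Qed.

Lemma polar_sub (z0 : C) (r th : R) : Cminus (polar z0 r th) z0 = Cmult (RtoC r) (Cexpi th).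
Proof.
  destruct z0. unfold polar, Cexpi, Cminus, Cplus, Copp, Cmult, RtoC; simpl.
  apply injective_projections; simpl; ring.
Qed.

Lemma polar_0 (z0 : C) (th : R) : polar z0 0 th = z0.
Proof.
  destruct z0. unfold polar, Cexpi, Cplus, Cmult, RtoC; simpl.
  apply injective_projections; simpl; ring.
Qed.

Lemma polar_components (z0 : C) (r th : R) :
  polar z0 r th = (fst z0 + r * cos th, snd z0 + r * sin th).
Proof.
  unfold polar, Cexpi, Cplus, Cmult, RtoC; simpl.
  apply injective_projections; simpl; ring.
Qed.

Lemma Cmod_Cexpi (t : R) : Cmod (Cexpi t) = 1.
Proof.
  unfold Cmod, Cexpi; simpl.
  rewrite !Rmult_1_r, <- sqrt_1. f_equal. pose proof (sin2_cos2 t). unfold Rsqr in *. lra.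
Qed.

Lemma Cmod_polar_sub (z0 : C) (r th : R) : Cmod (Cminus (polar z0 r th) z0) = Rabs r.
Proof. now rewrite polar_sub, Cmod_mult, Cmod_R, Cmod_Cexpi, Rmult_1_r. Qed.

Lemma Re_increment_polar (p phi : C -> C) (z0 p0 : C) (n : nat) (r th : R) :
  p (polar z0 r th) = Cminus (p z0) (Cmult p0 (Cmult (Cpow (Cminus (polar z0 r th) z0) n)
                                                 (Cminus (RtoC 1) (phi (polar z0 r th))))) ->
  Re (Cminus (p (polar z0 r th)) (p z0)) = r ^ n * re_profile p0 phi z0 n r th.
Proof.
  intros ->. rewrite polar_sub, Cpow_polar. unfold re_profile.
  destruct (phi (polar z0 r th)), p0, (p z0).
  unfold Re, Cminus, Cplus, Copp, Cmult, Cexpi, RtoC; simpl. ring.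
Qed.

Lemma re_profile_origin (p0 : C) (omega0 : R) (phi : C -> C) (z0 : C) (n : nat) (th : R) :
  p0 = Cmult (RtoC (Cmod p0)) (Cexpi omega0) -> phi z0 = RtoC 0 ->
  re_profile p0 phi z0 n 0 th = - Cmod p0 * cos (omega0 + INR n * th).
Proof.
  intros Hp0 Hphi0. unfold re_profile. remember (Cmod p0) as M.
  rewrite polar_0, Hphi0, Hp0, cos_plus.
  unfold Re, Cminus, Cplus, Copp, Cmult, Cexpi, RtoC; simpl. ring.
Qed.

Lemma holomorphic_continuous (f : C -> C) (B : C -> Prop) (z : C) :
  holomorphic_on f B -> B z -> @continuous C_UniformSpace C_UniformSpace f z.
Proof.
  intros Hf Hz P HP. apply locally_C. exact (ex_derive_continuous f z (Hf z Hz) P HP).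
Qed.

Lemma continuity_pt_re_profile (p0 : C) (phi : C -> C) (z0 : C) (n : nat)
    (rho th : R -> R) (t : R) :
  continuity_pt rho t -> continuity_pt th t ->
  @continuous C_UniformSpace C_UniformSpace phi (polar z0 (rho t) (th t)) ->
  continuity_pt (fun s => re_profile p0 phi z0 n (rho s) (th s)) t.
Proof.
  intros Hrho Hth Hphi.
  assert (Hconst : forall a : R, continuity_pt (fun _ => a) t).
  { intro a. now apply continuity_pt_const. }
  assert (Hcos : forall a : R, continuity_pt (fun s => cos (a * th s)) t).
  { intro a. apply (continuity_pt_comp (fun s => a * th s)), continuity_cos.
    now apply continuity_pt_mult. }
  assert (Hsin : forall a : R, continuity_pt (fun s => sin (a * th s)) t).
  { intro a. apply (continuity_pt_comp (fun s => a * th s)), continuity_sin.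
    now apply continuity_pt_mult. }
  assert (Hpolar : @continuous R_UniformSpace C_UniformSpace
                     (fun s => polar z0 (rho s) (th s)) t).
  { apply (continuous_ext (fun s => (fst z0 + rho s * cos (1 * th s),
                                     snd z0 + rho s * sin (1 * th s)))).
    { intro s. now rewrite polar_components, Rmult_1_l. }
    apply (continuous_comp_2 (V := R_UniformSpace) (W := R_UniformSpace)
             _ _ (fun a b => (a, b))).
    - apply continuity_pt_filterlim, continuity_pt_plus, continuity_pt_mult; auto.
    - apply continuity_pt_filterlim, continuity_pt_plus, continuity_pt_mult; auto.
    - apply (continuous_ext (fun x => x)); [now intros [] | apply continuous_id]. }
  assert (Hphi_path : @continuous R_UniformSpace C_UniformSpace
                        (fun s => phi (polar z0 (rho s) (th s))) t).
  { now apply (continuous_comp _ phi). }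
  assert (Hre : continuity_pt (fun s => fst (phi (polar z0 (rho s) (th s)))) t).
  { apply continuity_pt_filterlim.
    apply (continuous_comp (V := C_UniformSpace) (W := R_UniformSpace)
             (fun s => phi (polar z0 (rho s) (th s))) fst); [exact Hphi_path |].
    destruct (phi _). apply continuous_fst. }
  assert (Him : continuity_pt (fun s => snd (phi (polar z0 (rho s) (th s)))) t).
  { apply continuity_pt_filterlim.
    apply (continuous_comp (V := C_UniformSpace) (W := R_UniformSpace)
             (fun s => phi (polar z0 (rho s) (th s))) snd); [exact Hphi_path |].
    destruct (phi _). apply continuous_snd. }
  apply (continuity_pt_ext (fun s =>
    - ((fst p0 * cos (INR n * th s) - snd p0 * sin (INR n * th s))
         * (1 - fst (phi (polar z0 (rho s) (th s))))
       + (fst p0 * sin (INR n * th s) + snd p0 * cos (INR n * th s))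
         * snd (phi (polar z0 (rho s) (th s)))))).
  { intro s. unfold re_profile. destruct (phi _), p0.
    unfold Re, Cminus, Cplus, Copp, Cmult, Cexpi, RtoC; simpl. ring. }
  apply continuity_pt_opp, continuity_pt_plus; apply continuity_pt_mult;
    repeat first [apply continuity_pt_minus | apply continuity_pt_plus
                 | apply continuity_pt_mult]; auto.
Qed.

Lemma same_sign_trans (a b c : R) : 0 < a * b -> 0 < b * c -> 0 < a * c.
Proof. intros Hab Hbc. destruct (Rlt_or_le b 0); nra. Qed.

Definition steepest_angle (omega0 : R) (n : nat) (m : Z) : R :=
  - omega0 / INR n + PI * IZR m / INR n.

Section SignPattern.

Variables (p0 : C) (omega0 : R) (phi : C -> C) (z0 : C) (n : nat) (Rp : R)
          (f : Z -> R -> R).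
Hypothesis n_pos : (1 <= n)%nat.
Hypothesis p0_polar : p0 = Cmult (RtoC (Cmod p0)) (Cexpi omega0).
Hypothesis p0_nz : p0 <> RtoC 0.
Hypothesis phi_cont : forall z, Cmod (Cminus z z0) <= Rp ->
  @continuous C_UniformSpace C_UniformSpace phi z.
Hypothesis phi_z0 : phi z0 = RtoC 0.
Hypothesis f_near : forall l r, 0 <= r <= Rp ->
  Rabs (f l r - (- omega0 / INR n + PI * (IZR l + 1/2) / INR n)) <= PI / (4 * INR n).
Hypothesis profile_roots : forall r th, 0 < r <= Rp ->
  (re_profile p0 phi z0 n r th = 0 <-> exists l, th = f l r).

Let G := re_profile p0 phi z0 n.
Let alpha := steepest_angle omega0 n.

Lemma n_INR_pos : 0 < INR n.
Proof. apply lt_0_INR. lia. Qed.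

Lemma f_interlaced (r : R) : 0 <= r <= Rp -> forall k,
  Rabs (f k r - (- omega0 / INR n + PI / INR n * (IZR k + 1/2))) <= PI / INR n / 4.
Proof.
  intros Hr k. pose proof n_INR_pos.
  replace (PI / INR n * (IZR k + 1/2)) with (PI * (IZR k + 1/2) / INR n) by (field; lra).
  replace (PI / INR n / 4) with (PI / (4 * INR n)) by (field; lra).
  now apply f_near.
Qed.

Lemma PI_div_n_pos : 0 < PI / INR n.
Proof. apply Rdiv_lt_0_compat; [apply PI_RGT_0 | apply n_INR_pos]. Qed.

Lemma steepest_angle_in_gap (r : R) (m : Z) : 0 <= r <= Rp ->
  f (m - 1)%Z r < alpha m < f m r.
Proof.
  intros Hr. pose proof n_INR_pos.
  replace (alpha m) with (- omega0 / INR n + PI / INR n * IZR m)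
    by (unfold alpha, steepest_angle; field; lra).
  exact (interlacing_gap_mid _ _ (fun k => f k r) PI_div_n_pos (f_interlaced r Hr) m).
Qed.

Lemma re_profile_origin_steepest (m : Z) : G 0 (alpha m) = - Cmod p0 * cos (IZR m * PI).
Proof.
  pose proof n_INR_pos. unfold G. rewrite (re_profile_origin _ omega0) by assumption.
  do 2 f_equal. unfold alpha, steepest_angle. field. lra.
Qed.

Lemma re_profile_origin_steepest_nz (m : Z) : G 0 (alpha m) <> 0.
Proof.
  rewrite re_profile_origin_steepest.
  assert (0 < Cmod p0) by now apply Cmod_gt_0.
  destruct (Z.Even_or_Odd m) as [Hm | Hm];
    [rewrite cos_mult_PI_even | rewrite cos_mult_PI_odd]; auto; lra.
Qed.

Lemma re_profile_steepest_sign (r : R) (m : Z) : 0 <= r <= Rp ->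
  0 < G r (alpha m) * G 0 (alpha m).
Proof.
  intros Hr. rewrite Rmult_comm.
  apply (no_root_same_sign (fun s => G s (alpha m))); [lra | |].
  - intros s Hs. apply continuity_pt_re_profile.
    + apply continuity_pt_id.
    + now apply continuity_pt_const.
    + apply phi_cont. rewrite Cmod_polar_sub, Rabs_pos_eq; lra.
  - intros s Hs Hroot. destruct (Req_dec s 0) as [-> | Hs0].
    + exact (re_profile_origin_steepest_nz m Hroot).
    + apply profile_roots in Hroot as [k Hk]; [| lra].
      apply (interlacing_gap_free _ _ (fun k => f k s) PI_div_n_pos (f_interlaced s ltac:(lra)) k m).
      rewrite <- Hk. apply steepest_angle_in_gap. lra.
Qed.

Lemma re_profile_gap_sign (r th : R) (m : Z) : 0 < r <= Rp ->
  f (m - 1)%Z r < th < f m r -> 0 < G r th * G 0 (alpha m).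
Proof.
  intros Hr Hth. apply (same_sign_trans _ (G r (alpha m))).
  - apply (same_gap_same_sign _ _ (fun k => f k r) PI_div_n_pos (f_interlaced r ltac:(lra))
             (G r) m).
    + intro t. apply (continuity_pt_re_profile _ _ _ _ (fun _ => r) (fun s => s)).
      * now apply continuity_pt_const.
      * apply continuity_pt_id.
      * apply phi_cont. rewrite Cmod_polar_sub, Rabs_pos_eq; lra.
    + intros t Ht. now apply (profile_roots r t Hr).
    + exact Hth.
    + apply steepest_angle_in_gap. lra.
  - apply re_profile_steepest_sign. lra.
Qed.

Lemma re_profile_neg_iff (r th : R) : 0 < r <= Rp ->
  G r th < 0 <-> exists l, f (2 * l - 1)%Z r < th < f (2 * l)%Z r.
Proof.
  intros Hr. assert (0 < Cmod p0) by now apply Cmod_gt_0. split.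
  - intros Hneg.
    destruct (interlacing_cover _ _ (fun k => f k r) PI_div_n_pos (f_interlaced r ltac:(lra)) th)
      as [m Hm].
    { intros k Hk. assert (G r th = 0) by (apply profile_roots; eauto). lra. }
    pose proof (re_profile_gap_sign r th m Hr Hm) as Hsign.
    rewrite re_profile_origin_steepest in Hsign.
    destruct (Z.Even_or_Odd m) as [[l ->] | Hodd]; [now exists l |].
    rewrite cos_mult_PI_odd in Hsign by exact Hodd. nra.
  - intros [l Hl].
    pose proof (re_profile_gap_sign r th (2 * l) Hr Hl) as Hsign.
    rewrite re_profile_origin_steepest, cos_mult_PI_even in Hsign by now exists l. nra.
Qed.

End SignPattern.
Theorem corollary2p2
  (B : C -> Prop) (z0 : C) (p phi : C -> C) (mu : nat) (p0 : C)
  (omega0 Rp : R) (f : Z -> R -> R)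
  (HBopen : open B) (HBz0 : B z0)
  (Hp : holomorphic_on p B)
  (Hnc : exists z, B z /\ p z <> p z0)
  (Hmu : (1 <= mu)%nat) (Hp0 : p0 <> RtoC 0)
  (Hphi : holomorphic_on phi B) (Hphi0 : phi z0 = RtoC 0)
  (Hform : forall z, B z ->
     p z = Cminus (p z0) (Cmult p0 (Cmult (Cpow (Cminus z z0) mu) (Cminus (RtoC 1) (phi z)))))
  (Homega : is_arg p0 omega0)
  (HRp : 0 < Rp)
  (Hdisk : forall z, Cmod (Cminus z z0) <= Rp -> B z)
  (Hfdiff : forall l, diff_around (f l) Rp)
  (Hf0 : forall l, f l 0 = - omega0 / INR mu + PI * (IZR l + 1/2) / INR mu)
  (Hfclose : forall l r, 0 <= r <= Rp ->
     Rabs (f l r - (- omega0 / INR mu + PI * (IZR l + 1/2) / INR mu)) <= PI / (4 * INR mu))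
  (Hzeros0 : forall th,
     - Cmod p0 * cos (omega0 + INR mu * th) = 0 <-> exists l, th = f l 0)
  (Hzeros : forall r th, 0 < r <= Rp ->
     (Re (Cminus (p (Cplus z0 (Cmult (RtoC r) (Cexpi th)))) (p z0)) / r ^ mu = 0
      <-> exists l, th = f l r)) :
  let theta := fun l : Z => - omega0 / INR mu + 2 * PI * IZR l / INR mu in
  (forall l r, 0 <= r <= Rp -> f (2 * l - 1)%Z r < theta l < f (2 * l)%Z r) /\
  (forall l r, 0 < r <= Rp ->
     Re (Cminus (p (Cplus z0 (Cmult (RtoC r) (Cexpi (theta l))))) (p z0)) < 0) /\
  (forall r th, 0 < r <= Rp ->
     (Re (Cminus (p (Cplus z0 (Cmult (RtoC r) (Cexpi th)))) (p z0)) < 0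
      <-> exists l, f (2 * l - 1)%Z r < th < f (2 * l)%Z r)).
Proof.
  intros theta.
  destruct Homega as [_ Hpolar].
  assert (Hn : 0 < INR mu) by (apply lt_0_INR; lia).
  assert (Htheta : forall l, theta l = steepest_angle omega0 mu (2 * l)).
  { intro l. unfold theta, steepest_angle. rewrite mult_IZR. field. lra. }
  assert (Hphi_cont : forall z, Cmod (Cminus z z0) <= Rp ->
            @continuous C_UniformSpace C_UniformSpace phi z).
  { intros z Hz. now apply (holomorphic_continuous _ B), Hdisk. }
  assert (HRe : forall r th, 0 < r <= Rp ->
            Re (Cminus (p (Cplus z0 (Cmult (RtoC r) (Cexpi th)))) (p z0))
            = r ^ mu * re_profile p0 phi z0 mu r th).
  { intros r th Hr. apply Re_increment_polar, Hform, Hdisk.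
    rewrite Cmod_polar_sub, Rabs_pos_eq; lra. }
  assert (Hroots : forall r th, 0 < r <= Rp ->
            (re_profile p0 phi z0 mu r th = 0 <-> exists l, th = f l r)).
  { intros r th Hr. rewrite <- (Hzeros r th Hr), HRe by exact Hr.
    assert (Hpow : 0 < r ^ mu) by (apply pow_lt; lra).
    unfold Rdiv. rewrite Rmult_comm, <- Rmult_assoc, Rinv_l, Rmult_1_l by lra. reflexivity. }
  pose proof (re_profile_neg_iff _ _ _ _ _ _ _ Hmu Hpolar Hp0 Hphi_cont Hphi0 Hfclose Hroots)
    as Hneg.
  split; [| split].
  - intros l r Hr. rewrite Htheta. exact (steepest_angle_in_gap _ _ _ _ Hmu Hfclose r _ Hr).
  - intros l r Hr. rewrite HRe by exact Hr.
    assert (Hpow : 0 < r ^ mu) by (apply pow_lt; lra).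
    enough (re_profile p0 phi z0 mu r (theta l) < 0) by nra.
    apply Hneg; [exact Hr |]. exists l.
    rewrite Htheta. apply (steepest_angle_in_gap _ _ _ _ Hmu Hfclose). lra.
  - intros r th Hr. rewrite HRe, <- Hneg by exact Hr.
    assert (Hpow : 0 < r ^ mu) by (apply pow_lt; lra).
    split; intro Hsign; nra.
Qed.
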